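(* For every simple type $A$, the topological space $\widehat{\Lambda}(A)$ of profinite $\lambda$-terms of type $A$ is (homeomorphic to) the Stone dual space of the Boolean algebra $\mathrm{Reg}(A)$. In particular, $\mathrm{Reg}(A)$ is isomorphic to the Boolean algebra of clopen subsets of $\widehat{\Lambda}(A)$.
   Context: Simple types are generated from a base type $o$ by $\Rightarrow$; $\Lambda(A)$ is the set of closed simply typed $\lambda$-terms of type $A$ modulo $\beta\eta$. For a finite set $Q$: $[\![o]\!]_Q = Q$, $[\![A\Rightarrow B]\!]_Q$ = all functions $[\![A]\!]_Q \to [\![B]\!]_Q$, $[\![M]\!]_Q$ the standard interpretation, $D_Q(A) = \{[\![M]\!]_Q : M \in \Lambda(A)\}$. $\mathrm{Reg}_Q(A) = \{\{M : [\![M]\!]_Q \in F\} : F \subseteq [\![A]\!]_Q\}$ and $\mathrm{Reg}(A) = \bigcup_{Q\text{ finite}} \mathrm{Reg}_Q(A) \subseteq \wp(\Lambda(A))$, which is a Boolean algebra. Logical relations: for $R \subseteq Q\times Q'$, $[\![o]\!]_R = R$, $[\![A\Rightarrow B]\!]_R = \{(g,h) : \forall (x,y)\in[\![A]\!]_R,\ (g(x),h(y))\in[\![B]\!]_R\}$. A partial surjection $f \colon Q \twoheadrightarrow Q'$ is a relation that is the graph of a partial function surjective onto $Q'$. A profinite $\lambda$-term of type $A$ is a family $\theta=(\theta_Q)$, $Q$ ranging over finite sets, with $\theta_Q \in D_Q(A)$ and $(\theta_Q,\theta_{Q'}) \in [\![A]\!]_f$ for every partial surjection $f\colon Q\twoheadrightarrow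 Q'$. $\widehat{\Lambda}(A)$ is the set of these, with topology having basis $U_{Q,q} = \{\theta : \theta_Q = q\}$ for $Q$ finite and $q \in D_Q(A)$. *)

From mathcomp Require Import all_boot.
Set Implicit Arguments.
Unset Strict Implicit.
Unset Printing Implicit Defensive.

Inductive ty : Type := o : ty | arr : ty -> ty -> ty.

Inductive var : list ty -> ty -> Type :=
| vz : forall G A, var (cons A G) A
| vs : forall G A B, var G A -> var (cons B G) A.

Inductive tm : list ty -> ty -> Type :=
| Var : forall G A, var G A -> tm G A
| Lam : forall G A B, tm (cons A G) B -> tm G (arr A B)
| App : forall G A B, tm G (arr A B) -> tm G A -> tm G B.

Definition var_case (A : ty) (G : list ty) (P : ty -> Type)
  (z : P A) (s : forall B, var G B -> P B) : forall B, var (cons A G) B -> P B :=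
  fun B v =>
    match v in var G' B' return
      (match G' return Type with
       | nil => unit
       | cons A' G'' => P A' -> (forall C, var G'' C -> P C) -> P B'
       end) with
    | vz _ _ => fun z _ => z
    | vs _ _ _ v' => fun _ s => s _ v'
    end z s.

Definition var_nil (P : ty -> Type) : forall B, var nil B -> P B :=
  fun B v =>
    match v in var G' B' return
      (match G' return Type with nil => P B' | cons _ _ => unit end) with
    | vz _ _ => tt
    | vs _ _ _ _ => tt
    end.

Fixpoint ren (G : list ty) (A : ty) (t : tm G A) {struct t} :
  forall D, (forall B, var G B -> var D B) -> tm D A :=
  match t in tm G' A' return forall D, (forall B, var G' B -> var D B) -> tm D A' with
  | Var _ _ v => fun D r => Var (r _ v)
  | Lam G0 A0 B0 t0 => fun D r =>
      Lam (ren t0 (var_case (P := var (cons A0 D)) (vz D A0)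
                            (fun C v => vs A0 (r C v))))
  | App _ _ _ t1 t2 => fun D r => App (ren t1 r) (ren t2 r)
  end.

Fixpoint subst (G : list ty) (A : ty) (t : tm G A) {struct t} :
  forall D, (forall B, var G B -> tm D B) -> tm D A :=
  match t in tm G' A' return forall D, (forall B, var G' B -> tm D B) -> tm D A' with
  | Var _ _ v => fun D s => s _ v
  | Lam G0 A0 B0 t0 => fun D s =>
      Lam (subst t0 (var_case (P := tm (cons A0 D)) (Var (vz D A0))
                              (fun C v => ren (s C v) (fun E w => vs A0 w))))
  | App _ _ _ t1 t2 => fun D s => App (subst t1 s) (subst t2 s)
  end.

Definition subst1 (G : list ty) (A B : ty) (t : tm (cons A G) B) (u : tm G A) : tm G B :=
  subst t (var_case (P := tm G) u (fun C v => Var v)).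

Inductive conv : forall G A, tm G A -> tm G A -> Prop :=
| conv_beta : forall G A B (t : tm (cons A G) B) (u : tm G A),
    conv (App (Lam t) u) (subst1 t u)
| conv_eta : forall G A B (t : tm G (arr A B)),
    conv t (Lam (App (ren t (fun C v => vs A v)) (Var (vz G A))))
| conv_refl : forall G A (t : tm G A), conv t t
| conv_sym : forall G A (t u : tm G A), conv t u -> conv u t
| conv_trans : forall G A (t u v : tm G A), conv t u -> conv u v -> conv t v
| conv_lam : forall G A B (t t' : tm (cons A G) B), conv t t' -> conv (Lam t) (Lam t')
| conv_app : forall G A B (t t' : tm G (arr A B)) (u u' : tm G A),
    conv t t' -> conv u u' -> conv (App t u) (App t' u').

(* Lambda(A) = closed terms of type A modulo beta-eta.  A subset of Lambda(A)
   is represented by a predicate on closed terms saturated under conv. *)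
Definition cterm (A : ty) := tm nil A.
Definition saturated (A : ty) (S : cterm A -> Prop) : Prop :=
  forall M N : cterm A, conv M N -> S M -> S N.

Fixpoint sem (Q : finType) (A : ty) : Type :=
  match A with
  | o => Q
  | arr A B => sem Q A -> sem Q B
  end.

Fixpoint interp (Q : finType) (G : list ty) (A : ty) (t : tm G A) {struct t} :
  (forall B, var G B -> sem Q B) -> sem Q A :=
  match t in tm G' A' return (forall B, var G' B -> sem Q B) -> sem Q A' with
  | Var _ _ v => fun rho => rho _ v
  | Lam G0 A0 B0 t0 => fun rho =>
      fun x : sem Q A0 => interp t0 (var_case (P := sem Q) x rho)
  | App _ _ _ t1 t2 => fun rho => (interp t1 rho) (interp t2 rho)
  end.

Definition csem (Q : finType) (A : ty) (M : cterm A) : sem Q A :=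
  interp M (var_nil (sem Q)).

Definition inD (Q : finType) (A : ty) (d : sem Q A) : Prop :=
  exists M : cterm A, csem Q M = d.

Definition RegQ (Q : finType) (A : ty) (S : cterm A -> Prop) : Prop :=
  saturated S /\
  exists F : sem Q A -> Prop, forall M : cterm A, S M <-> F (csem Q M).
Definition Reg (A : ty) (S : cterm A -> Prop) : Prop :=
  exists Q : finType, RegQ Q S.

Fixpoint logrel (Q Q' : finType) (R : Q -> Q' -> Prop) (A : ty) :
  sem Q A -> sem Q' A -> Prop :=
  match A return sem Q A -> sem Q' A -> Prop with
  | o => R
  | arr A B => fun g h => forall x y, @logrel Q Q' R A x y -> @logrel Q Q' R B (g x) (h y)
  end.

Definition partial_surj (Q Q' : finType) (f : Q -> Q' -> Prop) : Prop :=
  (forall x y y', f x y -> f x y' -> y = y') /\ (forall y : Q', exists x : Q, f x y).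

Definition is_profinite (A : ty) (th : forall Q : finType, sem Q A) : Prop :=
  (forall Q : finType, inD (th Q)) /\
  (forall (Q Q' : finType) (f : Q -> Q' -> Prop),
      partial_surj f -> @logrel Q Q' f A (th Q) (th Q')).

Definition profinite (A : ty) :=
  { th : forall Q : finType, sem Q A | is_profinite th }.

Definition basicU (A : ty) (Q : finType) (q : sem Q A) : profinite A -> Prop :=
  fun th => proj1_sig th Q = q.

Definition prof_basis (A : ty) (U : profinite A -> Prop) : Prop :=
  exists (Q : finType) (q : sem Q A), inD q /\ (forall th, U th <-> basicU q th).

Fixpoint inl (T : Type) (x : T) (l : seq T) : Prop :=
  match l with nil => False | cons y l' => y = x \/ inl x l' end.

(* open sets of the topology generated by B (B used as a subbasis; when B
   is a basis this is exactly the topology with basis B) *)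
Definition gen_open (X : Type) (B : (X -> Prop) -> Prop) (U : X -> Prop) : Prop :=
  forall x, U x -> exists l : seq (X -> Prop),
    (forall b, inl b l -> B b) /\
    (forall b, inl b l -> b x) /\
    (forall y, (forall b, inl b l -> b y) -> U y).

Definition homeomorphic (X Y : Type) (BX : (X -> Prop) -> Prop)
  (BY : (Y -> Prop) -> Prop) : Prop :=
  exists (h : X -> Y) (g : Y -> X),
    (forall x, g (h x) = x) /\ (forall y, h (g y) = y) /\
    (forall V, gen_open BY V -> gen_open BX (fun x => V (h x))) /\
    (forall U, gen_open BX U -> gen_open BY (fun y => U (g y))).

Definition set_eq (T : Type) (S S' : T -> Prop) := forall x, S x <-> S' x.
Definition set_le (T : Type) (S S' : T -> Prop) := forall x, S x -> S' x.

Definition ultrafilter (A : ty) (U : (cterm A -> Prop) -> Prop) : Prop :=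
  (forall S, U S -> Reg S) /\
  (forall S S', U S -> set_eq S S' -> U S') /\
  U (fun _ => True) /\
  ~ U (fun _ => False) /\
  (forall S S', U S -> U S' -> U (fun M => S M /\ S' M)) /\
  (forall S S', U S -> Reg S' -> set_le S S' -> U S') /\
  (forall S, Reg S -> U S \/ U (fun M => ~ S M)).

Definition stone (A : ty) := { U : (cterm A -> Prop) -> Prop | ultrafilter U }.

Definition stone_basis (A : ty) (V : stone A -> Prop) : Prop :=
  exists S, Reg S /\ (forall U, V U <-> proj1_sig U S).

Definition prof_clopen (A : ty) (C : profinite A -> Prop) : Prop :=
  gen_open (@prof_basis A) C /\ gen_open (@prof_basis A) (fun th => ~ C th).

Definition reg_clopen_iso (A : ty) (phi : (cterm A -> Prop) -> (profinite A -> Prop)) : Prop :=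
  (forall S, Reg S -> prof_clopen (phi S)) /\
  (forall S S', Reg S -> Reg S' -> set_eq S S' -> set_eq (phi S) (phi S')) /\
  (forall S S', Reg S -> Reg S' -> set_eq (phi S) (phi S') -> set_eq S S') /\
  (forall C, prof_clopen C -> exists S, Reg S /\ set_eq (phi S) C) /\
  (forall S S', Reg S -> Reg S' ->
      set_eq (phi (fun M => S M /\ S' M)) (fun th => phi S th /\ phi S' th)) /\
  (forall S S', Reg S -> Reg S' ->
      set_eq (phi (fun M => S M \/ S' M)) (fun th => phi S th \/ phi S' th)) /\
  (forall S, Reg S -> set_eq (phi (fun M => ~ S M)) (fun th => ~ phi S th)) /\
  set_eq (phi (fun _ => True)) (fun _ => True) /\
  set_eq (phi (fun _ => False)) (fun _ => False).

(* Profinite terms are locally terms: restricting along the partial surjections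
   'I_(n+1) ->> Q given by enumerating Q, the fundamental lemma of logical relations
   shows that a profinite term coincides with one closed term M on every Q with
   #|Q| <= n+1.  Hence a profinite term decides every regular language S (it lies in
   S iff such an M does, for Q recognising S), which yields an ultrafilter of Reg(A);
   conversely an ultrafilter contains exactly one fibre {M | [[M]]_Q = q} for each Q,
   and these q form a profinite term.  Both maps are continuous because the basic
   opens correspond to fibres.  Finally the levels 'I_(n+1) present the space as an
   inverse limit of finite sets, so by Koenig's lemma a clopen set depends on one
   level only, i.e. it is the set of profinite terms in a regular language. *)

From mathcomp Require Import all_boot.
From Stdlib Require Import Classical ClassicalEpsilon.
From Stdlib Require Import FunctionalExtensionality PropExtensionality ProofIrrelevance.
Set Implicit Arguments.
Unset Strict Implicit.
Unset Printing Implicit Defensive.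

Lemma var_cons_ind (A : ty) (G : list ty) (P : forall B, var (A :: G) B -> Prop) :
  P A (vz G A) -> (forall B (v : var G B), P B (vs A v)) -> forall B v, P B v.
Proof.
move=> Pz Ps B v.
refine (match v as v' in var G' B' return
  (match G' as G'' return var G'' B' -> Prop with
   | nil => fun _ => True
   | cons A' G0 => fun w => forall P' : (forall B, var (A' :: G0) B -> Prop),
        P' A' (vz G0 A') -> (forall B (w : var G0 B), P' B (vs A' w)) -> P' B' w
   end v') with
  | vz _ _ => fun P' pz ps => pz
  | vs _ _ _ w => fun P' pz ps => ps _ w
  end P Pz Ps).
Qed.

Lemma var_nil_False B (v : var nil B) : False.
Proof.
exact (match v in var G' _ return (match G' with nil => False | _ => True end) with
  | vz _ _ => I | vs _ _ _ _ => I end).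
Qed.

Lemma logrel_interp (Q Q' : finType) (R : Q -> Q' -> Prop) G A (t : tm G A) :
  forall rho rho', (forall B v, logrel R (rho B v) (rho' B v)) ->
  logrel R (interp t rho) (interp t rho').
Proof.
elim: t => {G A} [G A v | G A B t IH | G A B t1 IH1 t2 IH2] rho rho' Hrho /=.
- exact: Hrho.
- move=> x y Hxy; apply: IH.
  exact: (var_cons_ind (P := fun B v => logrel R (var_case x rho v) (var_case y rho' v))).
- exact: (IH1 _ _ Hrho _ _ (IH2 _ _ Hrho)).
Qed.

Lemma logrel_csem (Q Q' : finType) (R : Q -> Q' -> Prop) A (M : cterm A) :
  logrel R (csem Q M) (csem Q' M).
Proof. by apply: logrel_interp => B v; case: (var_nil_False v). Qed.

Lemma interp_ren (Q : finType) G A (t : tm G A) :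
  forall D (r : forall B, var G B -> var D B)
    (rho : forall B, var G B -> sem Q B) (rho' : forall B, var D B -> sem Q B),
  (forall B v, rho' B (r B v) = rho B v) -> interp (ren t r) rho' = interp t rho.
Proof.
elim: t => {G A} [G A v | G A B t IH | G A B t1 IH1 t2 IH2] D r rho rho' Hr /=.
- exact: Hr.
- apply: functional_extensionality => x; apply: IH.
  exact: (var_cons_ind (P := fun B v => var_case x rho'
    (var_case (P := var (A :: D)) (vz D A) (fun C v => vs A (r C v)) v) = var_case x rho v)).
- by rewrite (IH1 _ _ _ _ Hr) (IH2 _ _ _ _ Hr).
Qed.

Lemma interp_subst (Q : finType) G A (t : tm G A) :
  forall D (s : forall B, var G B -> tm D B)
    (rho : forall B, var G B -> sem Q B) (rho' : forall B, var D B -> sem Q B),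
  (forall B v, interp (s B v) rho' = rho B v) -> interp (subst t s) rho' = interp t rho.
Proof.
elim: t => {G A} [G A v | G A B t IH | G A B t1 IH1 t2 IH2] D s rho rho' Hs /=.
- exact: Hs.
- apply: functional_extensionality => x; apply: IH.
  apply: (var_cons_ind (P := fun B v => interp (var_case (P := tm (A :: D)) (Var (vz D A))
    (fun C v => ren (s C v) (fun E w => vs A w)) v) (var_case x rho') = var_case x rho v)) => //=.
  by move=> B1 v; rewrite -Hs; apply: interp_ren.
- by rewrite (IH1 _ _ _ _ Hs) (IH2 _ _ _ _ Hs).
Qed.

Lemma interp_conv (Q : finType) G A (t u : tm G A) : conv t u ->
  forall rho : forall B, var G B -> sem Q B, interp t rho = interp u rho.
Proof.
elim => {G A t u}.
- move=> G A B t u rho /=; symmetry; apply: interp_subst.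
  exact: (var_cons_ind (P := fun B' v => interp (var_case (P := tm G) u (fun C v => Var v) v) rho
    = var_case (interp u rho) rho v)).
- move=> G A B t rho /=; apply: functional_extensionality => x.
  by rewrite (@interp_ren Q G _ t _ _ rho).
- by [].
- by move=> G A t u _ IH rho; rewrite IH.
- by move=> G A t u v _ IH1 _ IH2 rho; rewrite IH1 IH2.
- by move=> G A B t t' _ IH rho /=; apply: functional_extensionality => x; apply: IH.
- by move=> G A B t t' u u' _ IH1 _ IH2 rho /=; rewrite IH1 IH2.
Qed.

Lemma csem_conv (Q : finType) A (M N : cterm A) : conv M N -> csem Q M = csem Q N.
Proof. by move=> MN; apply: interp_conv. Qed.

Fixpoint sem_default (Q : finType) (q0 : Q) A : sem Q A :=
  match A with o => q0 | arr A B => fun _ => sem_default q0 B end.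

(* Functionality at [A => B] needs surjectivity at [A], so both are proved together. *)
Lemma logrel_partial_surj (P Q : finType) (f : P -> Q -> Prop) (p0 : P) :
  partial_surj f -> forall A,
  (forall (x : sem P A) y y', logrel f x y -> logrel f x y' -> y = y') /\
  (forall y : sem Q A, exists x : sem P A, logrel f x y).
Proof.
move=> [f_fun f_surj]; elim => [|A [funA surjA] B [funB surjB]] /=; first by split.
split.
- move=> g h h' gh gh'; apply: functional_extensionality => y.
  have [x xy] := surjA y; exact: funB _ _ _ (gh _ _ xy) (gh' _ _ xy).
- move=> h.
  pose pre y := proj1_sig (constructive_indefinite_description _ (surjB y)).
  have preP y : logrel f (pre y) y by rewrite /pre; case: constructive_indefinite_description.
  exists (fun x => match excluded_middle_informative (exists y, logrel f x y) with
    | left ex => pre (h (proj1_sig (constructive_indefinite_description _ ex)))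
    | right _ => sem_default p0 B end).
  move=> x y xy; case: excluded_middle_informative => [ex|]; last by case; exists y.
  case: constructive_indefinite_description => y' xy' /=.
  by rewrite (funA _ _ _ xy xy').
Qed.

Lemma profinite_agree A (th th' : forall Q : finType, sem Q A)
    (P Q : finType) (f : P -> Q -> Prop) (p0 : P) :
  is_profinite th -> is_profinite th' -> partial_surj f -> th P = th' P -> th Q = th' Q.
Proof.
move=> [_ th_rel] [_ th'_rel] f_surj E; have [f_fun _] := logrel_partial_surj p0 f_surj A.
apply: (f_fun (th P)); first exact: th_rel.
by rewrite E; apply: th'_rel.
Qed.

Lemma csem_profinite A (M : cterm A) : is_profinite (fun Q : finType => csem Q M).
Proof. by split=> [Q | Q Q' f _]; [exists M | apply: logrel_csem]. Qed.

Definition prin A (M : cterm A) : profinite A := exist _ _ (csem_profinite M).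

(* [n.+1] keeps every level nonempty, as [logrel_partial_surj] needs a point. *)
Definition level (n : nat) : finType := 'I_n.+1.

Lemma card_level n : #|level n| = n.+1.
Proof. exact: card_ord. Qed.

Definition level_rel (Q : finType) n : level n -> Q -> Prop :=
  fun i q => nat_of_ord i = enum_rank q.

Lemma level_rel_surj (Q : finType) n : #|Q| <= n.+1 -> partial_surj (@level_rel Q n).
Proof.
rewrite /level_rel => le_Qn; split=> [i q q' -> /ord_inj/enum_rank_inj // | q].
by exists (inord (enum_rank q)); rewrite inordK // (leq_trans (ltn_ord _)).
Qed.

Section Levels.
Variables (A : ty) (th th' : forall Q : finType, sem Q A).
Hypotheses (th_prof : is_profinite th) (th'_prof : is_profinite th').

Lemma agree_level (Q : finType) n :
  #|Q| <= n.+1 -> th (level n) = th' (level n) -> th Q = th' Q.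
Proof. by move=> /level_rel_surj; apply: (profinite_agree ord0). Qed.

Lemma agree_level_le m n : m <= n -> th (level n) = th' (level n) -> th (level m) = th' (level m).
Proof. by move=> le_mn; apply: agree_level; rewrite card_level. Qed.

End Levels.

Lemma profinite_local A (th : forall Q : finType, sem Q A) n : is_profinite th ->
  exists N : cterm A, forall Q : finType, #|Q| <= n.+1 -> th Q = csem Q N.
Proof.
move=> th_prof; have [N thN] := proj1 th_prof (level n).
by exists N => Q le_Qn; apply: (agree_level th_prof (csem_profinite N) le_Qn).
Qed.

Lemma sem_finite (Q : finType) A :
  exists (T : finType) (s : T -> sem Q A), forall x, exists t, s t = x.
Proof.
elim: A => [|A [TA [sA sA_surj]] B [TB [sB sB_surj]]] /=; first by exists Q, id => x; exists x.
pose preA x := proj1_sig (constructive_indefinite_description _ (sA_surj x)).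
pose preB y := proj1_sig (constructive_indefinite_description _ (sB_surj y)).
have preAK x : sA (preA x) = x by rewrite /preA; case: constructive_indefinite_description.
have preBK y : sB (preB y) = y by rewrite /preB; case: constructive_indefinite_description.
exists {ffun TA -> TB}, (fun (g : {ffun TA -> TB}) x => sB (g (preA x))) => h.
exists [ffun t => preB (h (sA t))].
by apply: functional_extensionality => x; rewrite ffunE preBK preAK.
Qed.

Section Regular.
Variable A : ty.
Implicit Types (Q : finType) (S : cterm A -> Prop) (M N : cterm A).

Lemma RegQ_intro Q S (F : sem Q A -> Prop) :
  (forall M, S M <-> F (csem Q M)) -> RegQ Q S.
Proof. by move=> SF; split; [move=> M N /(csem_conv Q) E; rewrite !SF E | exists F]. Qed.

Lemma RegQ_csem Q S M N : RegQ Q S -> csem Q M = csem Q N -> S M -> S N.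
Proof. by move=> [_ [F SF]] E; rewrite !SF E. Qed.

Lemma RegQ_ext Q S S' : RegQ Q S -> set_eq S S' -> RegQ Q S'.
Proof. by move=> [_ [F SF]] E; apply: (RegQ_intro (F := F)) => M; rewrite -E. Qed.

Lemma RegQ_True Q : RegQ Q (fun _ : cterm A => True).
Proof. exact: (RegQ_intro (F := fun _ => True)). Qed.

Lemma RegQ_fibre Q (q : sem Q A) : RegQ Q (fun M => csem Q M = q).
Proof. exact: (RegQ_intro (F := fun d => d = q)). Qed.

Lemma RegQ_not Q S : RegQ Q S -> RegQ Q (fun M => ~ S M).
Proof. by move=> [_ [F SF]]; apply: (RegQ_intro (F := fun d => ~ F d)) => M; rewrite SF. Qed.

Lemma RegQ_and Q S S' : RegQ Q S -> RegQ Q S' -> RegQ Q (fun M => S M /\ S' M).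
Proof.
move=> [_ [F SF]] [_ [F' SF']].
by apply: (RegQ_intro (F := fun d => F d /\ F' d)) => M; rewrite SF SF'.
Qed.

Lemma RegQ_or Q S S' : RegQ Q S -> RegQ Q S' -> RegQ Q (fun M => S M \/ S' M).
Proof.
move=> [_ [F SF]] [_ [F' SF']].
by apply: (RegQ_intro (F := fun d => F d \/ F' d)) => M; rewrite SF SF'.
Qed.

Lemma RegQ_level Q n S : #|Q| <= n.+1 -> RegQ Q S -> RegQ (level n) S.
Proof.
move=> le_Qn RS; apply: (RegQ_intro (F := fun d => exists N, d = csem (level n) N /\ S N)) => M.
split=> [SM | [N [E SN]]]; first by exists M.
apply: RegQ_csem RS _ SN.
exact: (agree_level (csem_profinite N) (csem_profinite M) le_Qn (esym E)).
Qed.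

Lemma Reg_common S S' : Reg S -> Reg S' -> exists n, RegQ (level n) S /\ RegQ (level n) S'.
Proof.
move=> [Q RS] [Q' RS']; exists (#|Q| + #|Q'|).
by split; [apply: RegQ_level RS; apply/leqW/leq_addr | apply: RegQ_level RS'; apply/leqW/leq_addl].
Qed.

End Regular.

(* Membership of a profinite term in [S], tested at any finite set recognising [S];
   [ultra_of_csem] shows the choice of that set is irrelevant. *)
Definition ultra_of A (th : forall Q : finType, sem Q A) (S : cterm A -> Prop) : Prop :=
  exists Q : finType, RegQ Q S /\ exists M, th Q = csem Q M /\ S M.

Section UltrafilterOfProfinite.
Variables (A : ty) (th : forall Q : finType, sem Q A).
Hypothesis th_prof : is_profinite th.
Implicit Types (Q : finType) (S : cterm A -> Prop) (M N : cterm A).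

Lemma ultra_of_Reg S : ultra_of th S -> Reg S.
Proof. by move=> [Q [RS _]]; exists Q. Qed.

Lemma ultra_of_csem Q S M : RegQ Q S -> th Q = csem Q M -> (ultra_of th S <-> S M).
Proof.
move=> RS thM; split=> [[Q1 [RS1 [M1 [thM1 SM1]]]] | SM]; last by exists Q; split; last exists M.
have [N thN] := profinite_local (#|Q| + #|Q1|) th_prof.
have SN : S N by apply: RegQ_csem RS1 _ SM1; rewrite -thM1 thN //; apply/leqW/leq_addl.
by apply: RegQ_csem RS _ SN; rewrite -thM thN //; apply/leqW/leq_addr.
Qed.

Lemma ultra_of_common S S' : Reg S -> Reg S' ->
  exists Q M, [/\ RegQ Q S, RegQ Q S' & th Q = csem Q M].
Proof.
move=> RS RS'; have [n [RnS RnS']] := Reg_common RS RS'.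
by have [M thM] := proj1 th_prof (level n); exists (level n), M.
Qed.

Lemma ultra_of_and S S' : Reg S -> Reg S' ->
  ultra_of th (fun M => S M /\ S' M) <-> ultra_of th S /\ ultra_of th S'.
Proof.
move=> /ultra_of_common/[apply] [[Q [M [RS RS' thM]]]].
by rewrite (ultra_of_csem (RegQ_and RS RS') thM) (ultra_of_csem RS thM) (ultra_of_csem RS' thM).
Qed.

Lemma ultra_of_or S S' : Reg S -> Reg S' ->
  ultra_of th (fun M => S M \/ S' M) <-> ultra_of th S \/ ultra_of th S'.
Proof.
move=> /ultra_of_common/[apply] [[Q [M [RS RS' thM]]]].
by rewrite (ultra_of_csem (RegQ_or RS RS') thM) (ultra_of_csem RS thM) (ultra_of_csem RS' thM).
Qed.

Lemma ultra_of_not S : Reg S -> ultra_of th (fun M => ~ S M) <-> ~ ultra_of th S.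
Proof.
move=> RS; have [Q [M [RQS _ thM]]] := ultra_of_common RS RS.
by rewrite (ultra_of_csem (RegQ_not RQS) thM) (ultra_of_csem RQS thM).
Qed.

Lemma ultra_of_ext S S' : set_eq S S' -> ultra_of th S -> ultra_of th S'.
Proof.
by move=> E [Q [RS [M [thM SM]]]]; exists Q; split; [apply: RegQ_ext E | exists M; rewrite -E].
Qed.

Lemma ultra_of_True : ultra_of th (fun _ => True).
Proof.
by have [M thM] := proj1 th_prof bool; exists bool; split; [apply: RegQ_True | exists M].
Qed.

Lemma ultra_of_False : ~ ultra_of th (fun _ => False).
Proof. by case=> Q [_ [M []]]. Qed.

Lemma ultra_of_ultrafilter : ultrafilter (ultra_of th).
Proof.
split; first exact: ultra_of_Reg.
split; first by move=> S S' /[swap]; apply: ultra_of_ext.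
split; first exact: ultra_of_True.
split; first exact: ultra_of_False.
split; first by move=> S S' thS thS'; apply/ultra_of_and; try apply: ultra_of_Reg.
split.
  move=> S S' thS RS' le_SS'; have [Q [M [RS RQS' thM]]] := ultra_of_common (ultra_of_Reg thS) RS'.
  by move: thS; rewrite (ultra_of_csem RS thM) (ultra_of_csem RQS' thM); apply: le_SS'.
move=> S RS; rewrite ultra_of_not //; exact: classic.
Qed.

End UltrafilterOfProfinite.

Section StoneToProfinite.
Variables (A : ty) (U : (cterm A -> Prop) -> Prop).
Hypothesis U_ultra : ultrafilter U.
Implicit Types (Q : finType) (S : cterm A -> Prop).

Lemma ultrafilter_nonempty S : U S -> exists M, S M.
Proof.
case: U_ultra => [_ [U_ext [_ [U_False _]]]] US; apply: NNPP => noM.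
by apply: U_False; apply: (U_ext _ _ US) => M; split=> // SM; apply: noM; exists M.
Qed.

Lemma ultrafilter_meet_seq (T : eqType) (l : seq T) (S : T -> cterm A -> Prop) :
  (forall t, U (S t)) -> U (fun M => forall t, t \in l -> S t M).
Proof.
case: U_ultra => [_ [U_ext [U_True [_ [U_meet _]]]]] US.
elim: l => [|t l IH]; first by apply: (U_ext _ _ U_True).
apply: (U_ext _ _ (U_meet _ _ (US t) IH)) => M; split.
- by move=> [StM SlM] t'; rewrite in_cons => /predU1P [-> | /SlM].
- by move=> SM; split=> [|t' t'l]; apply: SM; rewrite in_cons ?eqxx ?t'l ?orbT.
Qed.

Lemma ultrafilter_fibre Q : exists q : sem Q A, U (fun M => csem Q M = q).
Proof.
apply: NNPP => nofibre; case: U_ultra => [_ [_ [_ [_ [_ [_ U_compl]]]]]].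
have U_cofibre q : U (fun M => csem Q M <> q).
  by case: (U_compl _ (ex_intro _ Q (RegQ_fibre q))) => // Uq; case: nofibre; exists q.
have [T [s s_surj]] := sem_finite Q A.
have [M avoidM] := ultrafilter_nonempty (ultrafilter_meet_seq (enum T) (fun t => U_cofibre (s t))).
by have [t st] := s_surj (csem Q M); apply: (avoidM t); rewrite ?mem_enum.
Qed.

Lemma ultrafilter_fibre_uniq Q (q q' : sem Q A) :
  U (fun M => csem Q M = q) -> U (fun M => csem Q M = q') -> q = q'.
Proof.
case: U_ultra => [_ [_ [_ [_ [U_meet _]]]]] Uq Uq'.
by have [M [<- <-]] := ultrafilter_nonempty (U_meet _ _ Uq Uq').
Qed.

End StoneToProfinite.

Definition stone_val A (U : stone A) (Q : finType) : sem Q A :=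
  proj1_sig (constructive_indefinite_description _ (ultrafilter_fibre (proj2_sig U) Q)).

Section StoneVal.
Variables (A : ty) (U : stone A).

Lemma stone_valP Q : proj1_sig U (fun M => csem Q M = stone_val U Q).
Proof. by rewrite /stone_val; case: constructive_indefinite_description. Qed.

Lemma stone_val_eq Q q : proj1_sig U (fun M => csem Q M = q) -> stone_val U Q = q.
Proof. exact: (ultrafilter_fibre_uniq (proj2_sig U) (stone_valP Q)). Qed.

Lemma stone_val_profinite : is_profinite (stone_val U).
Proof.
have U_ultra := proj2_sig U; split=> [Q | Q Q' f _].
- by have [M <-] := ultrafilter_nonempty U_ultra (stone_valP Q); exists M.
- case: (U_ultra) => [_ [_ [_ [_ [U_meet _]]]]].
  have [M [<- <-]] := ultrafilter_nonempty U_ultra (U_meet _ _ (stone_valP Q) (stone_valP Q')).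
  exact: logrel_csem.
Qed.

End StoneVal.

Definition to_stone A (th : profinite A) : stone A :=
  exist _ (ultra_of (proj1_sig th)) (ultra_of_ultrafilter (proj2_sig th)).
Definition of_stone A (U : stone A) : profinite A :=
  exist _ (stone_val U) (stone_val_profinite U).

Lemma of_to_stone A (th : profinite A) : of_stone (to_stone th) = th.
Proof.
apply: (eq_sig_hprop (fun _ => proof_irrelevance _)); apply: functional_extensionality_dep => Q.
apply: stone_val_eq => /=.
have [M thM] := proj1 (proj2_sig th) Q.
by rewrite (ultra_of_csem (proj2_sig th) (RegQ_fibre _) (esym thM)).
Qed.

Lemma to_of_stone A (U : stone A) : to_stone (of_stone U) = U.
Proof.
apply: (eq_sig_hprop (fun _ => proof_irrelevance _)); apply: functional_extensionality => S.
apply: propositional_extensionality => /=.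
have U_ultra := proj2_sig U; case: (U_ultra) => [U_Reg [_ [_ [_ [U_meet [U_up _]]]]]].
split=> [[Q [RS [M [valM SM]]]] | US].
- have RegS : Reg S by exists Q.
  apply: (U_up _ _ (stone_valP U Q) RegS) => N valN.
  by apply: RegQ_csem RS _ SM; rewrite valN.
- have [Q RS] := U_Reg _ US.
  have [M [SM valM]] := ultrafilter_nonempty U_ultra (U_meet _ _ US (stone_valP U Q)).
  by exists Q; split; last exists M.
Qed.

Lemma inl_cat T (b : T) l1 l2 : inl b (l1 ++ l2) <-> inl b l1 \/ inl b l2.
Proof. by elim: l1 => [|a l IH] /=; [split; [right | case] | rewrite IH; tauto]. Qed.

Section GeneratedTopology.
Variables (X Y : Type) (BX : (X -> Prop) -> Prop) (BY : (Y -> Prop) -> Prop).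

Lemma gen_open_ext (U U' : X -> Prop) : set_eq U U' -> gen_open BX U -> gen_open BX U'.
Proof.
move=> E openU x /E Ux; have [l [lB [lx lU]]] := openU x Ux.
by exists l; split=> //; split=> // y /lU /E.
Qed.

Lemma gen_open_nbhd (U : X -> Prop) :
  (forall x, U x -> exists b, [/\ BX b, b x & forall y, b y -> U y]) -> gen_open BX U.
Proof.
move=> nbhd x /nbhd [b [Bb bx bU]]; exists [:: b].
split; first by move=> b' [<-|[]].
split; first by move=> b' [<-|[]].
by move=> y yb; apply: bU; apply: yb; left.
Qed.

Lemma gen_open_basic (b : X -> Prop) : BX b -> gen_open BX b.
Proof. by move=> Bb; apply: gen_open_nbhd => x bx; exists b. Qed.

Lemma gen_open_preimage (h : X -> Y) :
  (forall b, BY b -> gen_open BX (fun x => b (h x))) ->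
  forall V, gen_open BY V -> gen_open BX (fun x => V (h x)).
Proof.
move=> open_pre V openV x Vhx; have [l [lB [lhx lV]]] := openV _ Vhx.
suff [l' [l'B [l'x l'l]]] : exists l',
   (forall b, inl b l' -> BX b) /\ (forall b, inl b l' -> b x) /\
   (forall y, (forall b, inl b l' -> b y) -> forall b, inl b l -> b (h y)).
  by exists l'; split=> //; split=> // y /l'l /lV.
elim: l lB lhx {lV} => [|b l IH] /= lB lhx; first by exists [::].
have [la [laB [lax la_b]]] := open_pre b (lB b (or_introl erefl)) x (lhx b (or_introl erefl)).
have [lb [lbB [lbx lb_l]]] :=
  IH (fun b' bl => lB b' (or_intror bl)) (fun b' bl => lhx b' (or_intror bl)).
exists (la ++ lb); split; [|split] => [b' /inl_cat [] | b' /inl_cat [] | y l'y b' [<- | b'l]].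
- exact: laB.
- exact: lbB.
- exact: lax.
- exact: lbx.
- by apply: la_b => b'' b''la; apply: l'y; apply/inl_cat; left.
- by apply: lb_l b'l => b'' b''lb; apply: l'y; apply/inl_cat; right.
Qed.

End GeneratedTopology.

Arguments gen_open_ext {X BX U U'}.

Lemma open_ultra_of A (S : cterm A -> Prop) :
  gen_open (@prof_basis A) (fun th => ultra_of (proj1_sig th) S).
Proof.
apply: gen_open_nbhd => th [Q [RS [M [thM SM]]]]; exists (basicU (proj1_sig th Q)); split=> //.
- by exists Q, (proj1_sig th Q); split; first exact: (proj1 (proj2_sig th)).
- by move=> th' th'Q; exists Q; split=> //; exists M; rewrite th'Q.
Qed.

Lemma profinite_stone_homeomorphic A : homeomorphic (@prof_basis A) (@stone_basis A).
Proof.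
exists (@to_stone A), (@of_stone A); split; first exact: of_to_stone.
split; first exact: to_of_stone.
split; apply: gen_open_preimage.
- by move=> b [S [RS bS]]; apply: (gen_open_ext _ (@open_ultra_of _ S)) => th; rewrite bS.
- move=> b [Q [q [_ bq]]].
  apply: (gen_open_ext (U := fun U => proj1_sig U (fun M => csem Q M = q))).
    move=> U; rewrite bq /basicU /=.
    by split=> [/stone_val_eq | <-]; last exact: stone_valP.
  apply: gen_open_basic; exists (fun M => csem Q M = q).
  by split=> //; exists Q; apply: RegQ_fibre.
Qed.

Lemma exists_forall_antitone (T : finType) (P : T -> nat -> Prop) :
  (forall t m n, m <= n -> P t n -> P t m) -> (forall n, exists t, P t n) ->
  exists t, forall n, P t n.
Proof.
move=> P_anti P_some; apply: NNPP => none.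
have fails t : {n | ~ P t n}.
  apply: constructive_indefinite_description; apply: NNPP => holds.
  by apply: none; exists t => n; apply: NNPP => nPtn; apply: holds; exists n.
have [t Pt] := P_some (\max_t sval (fails t)).
by apply: (svalP (fails t)); apply: P_anti Pt; apply: leq_bigmax.
Qed.

Section LocallyConstantUniform.
Variables (X : Type) (V : nat -> Type) (val : forall m, X -> V m).
Hypothesis val_mono : forall m n x y, m <= n -> val n x = val n y -> val m x = val m y.
Hypothesis V_finite : forall m, exists (T : finType) (s : T -> V m), forall v, exists t, s t = v.
Hypothesis val_complete : forall xs : nat -> X, (forall m, val m (xs m.+1) = val m (xs m)) ->
  exists x, forall m, val m x = val m (xs m).
Variable C : X -> Prop.
Hypothesis C_loc_const : forall x, exists k, forall y, val k y = val k x -> (C y <-> C x).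

Definition mixed m x := exists y z, [/\ val m y = val m x, val m z = val m x, C y & ~ C z].

Definition mixed_below m x := forall n, exists y, val m y = val m x /\ mixed n y.

Lemma mixed_mono m n x : m <= n -> mixed n x -> mixed m x.
Proof. by move=> le_mn [y [z [yx zx Cy nCz]]]; exists y, z; split; try apply: val_mono le_mn _. Qed.

Lemma mixed_below_pick m (R : X -> Prop) :
  (forall n, exists x, R x /\ mixed n x) -> exists x, R x /\ mixed_below m x.
Proof.
move=> R_mixed; have [T [s s_surj]] := V_finite m.
pose P t n := exists x, [/\ s t = val m x, R x & mixed n x].
have [t Pt] : exists t, forall n, P t n.
  apply: exists_forall_antitone => [t n n' le_nn' [x [tx Rx xn']] | n].
    by exists x; split=> //; apply: mixed_mono xn'.
  have [x [Rx xn]] := R_mixed n; have [t tx] := s_surj (val m x).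
  by exists t, x; split.
have [x [tx Rx _]] := Pt 0; exists x; split=> // n.
by have [y [ty _ yn]] := Pt n; exists y; rewrite -tx -ty.
Qed.

Theorem locally_constant_uniform : exists k, forall x y, val k x = val k y -> C x -> C y.
Proof.
(* Koenig: a branch of cylinders mixed at every depth converges to a point where C is
   not locally constant. *)
apply: NNPP => nonuniform.
have mixed_all n : exists x, True /\ mixed n x.
  apply: NNPP => nomixed; apply: nonuniform; exists n => x y xy Cx; apply: NNPP => nCy.
  by apply: nomixed; exists x; split=> //; exists x, y.
have [x0 [_ x0_below]] := mixed_below_pick 0 mixed_all.
pose succ m x y := val m y = val m x /\ mixed_below m.+1 y.
pose next m x := epsilon (inhabits x) (succ m x).
have nextP m x : mixed_below m x -> succ m x (next m x).
  by move=> x_below; apply: epsilon_spec; exact: mixed_below_pick x_below.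
pose xs m := iteri m next x0.
have xs_below m : mixed_below m (xs m).
  by elim: m => [|m IH] //; rewrite /xs iteriS; apply: (nextP _ _ IH).2.
have [x x_lim] : exists x, forall m, val m x = val m (xs m).
  by apply: val_complete => m; rewrite /xs iteriS; apply: (nextP _ _ (xs_below m)).1.
have [k Ck] := C_loc_const x.
have [y [yk [z [w [zy wy Cz nCw]]]]] := xs_below k k.
by apply/nCw/Ck; [rewrite wy yk x_lim | apply/(Ck z) => //; rewrite zy yk x_lim].
Qed.

End LocallyConstantUniform.

Section ProfiniteLevels.
Variable A : ty.
Implicit Types (th : profinite A) (C : profinite A -> Prop).

Lemma profinite_limit (ths : nat -> profinite A) :
  (forall m, proj1_sig (ths m.+1) (level m) = proj1_sig (ths m) (level m)) ->
  exists th, forall m, proj1_sig th (level m) = proj1_sig (ths m) (level m).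
Proof.
move=> ths_coh.
have coh m n : m <= n -> proj1_sig (ths n) (level m) = proj1_sig (ths m) (level m).
  move=> /subnKC <-; elim: (n - m) => [|k IH]; first by rewrite addn0.
  rewrite addnS -IH; apply: agree_level_le (leq_addr k m) (ths_coh _);
    exact: proj2_sig.
have stable (Q : finType) n : #|Q| <= n -> proj1_sig (ths n) Q = proj1_sig (ths #|Q|) Q.
  move=> le_Qn; apply: agree_level (leqnSn _) (coh _ _ le_Qn); exact: proj2_sig.
pose th (Q : finType) := proj1_sig (ths #|Q|) Q.
have th_prof : is_profinite th.
  split=> [Q | Q Q' f f_surj]; first exact: (proj1 (proj2_sig (ths _)) Q).
  rewrite /th -(stable Q (maxn #|Q| #|Q'|)) ?leq_maxl //.
  rewrite -(stable Q' (maxn #|Q| #|Q'|)) ?leq_maxr //.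
  exact: (proj2 (proj2_sig (ths _))).
by exists (exist _ th th_prof) => m; rewrite /= /th card_level ths_coh.
Qed.

Lemma open_level_det (X : profinite A -> Prop) th : gen_open (@prof_basis A) X -> X th ->
  exists k, forall th', proj1_sig th' (level k) = proj1_sig th (level k) -> X th'.
Proof.
move=> openX Xth; have [l [lB [lth lX]]] := openX th Xth.
suff [k kl] : exists k, forall th', proj1_sig th' (level k) = proj1_sig th (level k) ->
    forall b, inl b l -> b th'.
  by exists k => th' /kl /lX.
elim: l lB lth {lX} => [|b l IH] /= lB lth; first by exists 0.
have [k kl] := IH (fun b' bl => lB b' (or_intror bl)) (fun b' bl => lth b' (or_intror bl)).
have [Q [q [_ bq]]] := lB b (or_introl erefl).
have /bq thq := lth b (or_introl erefl).
exists (maxn #|Q| k) => th' th'th b' [<- | b'l].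
- apply/bq; rewrite /basicU -thq; apply: agree_level th'th; try exact: proj2_sig.
  exact/leqW/leq_maxl.
- apply: kl b'l; apply: agree_level_le th'th; try exact: proj2_sig.
  exact: leq_maxr.
Qed.

Lemma clopen_level_det C : prof_clopen C ->
  exists k, forall th th', proj1_sig th (level k) = proj1_sig th' (level k) -> C th -> C th'.
Proof.
move=> [openC openNC].
apply: (locally_constant_uniform (val := fun m th => proj1_sig th (level m))).
- by move=> m n th th'; apply: agree_level_le; exact: proj2_sig.
- by move=> m; apply: sem_finite.
- exact: profinite_limit.
- move=> th; case: (classic (C th)) => [Cth | nCth].
  + by have [k Ck] := open_level_det openC Cth; exists k => th' /Ck.
  + have [k Ck] := open_level_det openNC nCth; exists k => th' /Ck; tauto.
Qed.

End ProfiniteLevels.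

Definition clopen_of A (S : cterm A -> Prop) : profinite A -> Prop :=
  fun th => ultra_of (proj1_sig th) S.

Lemma clopen_of_prin A (S : cterm A -> Prop) M : Reg S -> (clopen_of S (prin M) <-> S M).
Proof. by move=> [Q RS]; apply: (ultra_of_csem (csem_profinite M) RS). Qed.

Lemma clopen_of_onto A (C : profinite A -> Prop) : prof_clopen C ->
  exists S, Reg S /\ set_eq (clopen_of S) C.
Proof.
move=> /clopen_level_det [k Ck]; exists (fun M => C (prin M)).
have RS : RegQ (level k) (fun M => C (prin M)).
  apply: (RegQ_intro (F := fun d => exists th, proj1_sig th (level k) = d /\ C th)) => M.
  by split=> [CM | [th [thM Cth]]]; [exists (prin M) | exact: (Ck th (prin M))].
split; first by exists (level k).
move=> th; have [M thM] := proj1 (proj2_sig th) (level k).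
rewrite /clopen_of (ultra_of_csem (proj2_sig th) RS (esym thM)).
by split; [apply: (Ck (prin M) th thM) | apply: (Ck th (prin M) (esym thM))].
Qed.

Lemma clopen_of_iso A : reg_clopen_iso (@clopen_of A).
Proof.
split.
  move=> S RS; split; first exact: open_ultra_of.
  apply: (gen_open_ext _ (@open_ultra_of _ (fun M => ~ S M))) => th.
  exact: (ultra_of_not (proj2_sig th) RS).
split; first by move=> S S' _ _ E th; split; apply: ultra_of_ext => // M; rewrite E.
split.
  by move=> S S' RS RS' E M; rewrite -(clopen_of_prin M RS) -(clopen_of_prin M RS'); apply: E.
split; first exact: clopen_of_onto.
split; first by move=> S S' RS RS' th; apply: (ultra_of_and (proj2_sig th)).
split; first by move=> S S' RS RS' th; apply: (ultra_of_or (proj2_sig th)).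
split; first by move=> S RS th; apply: (ultra_of_not (proj2_sig th)).
split=> th; split=> //.
- by move=> _; apply: ultra_of_True (proj2_sig th).
- exact: ultra_of_False.
Qed.

Theorem mainTheorem7 (A : ty) :
  homeomorphic (@prof_basis A) (@stone_basis A) /\
  exists phi : (cterm A -> Prop) -> (profinite A -> Prop), reg_clopen_iso phi.
Proof.
split; first exact: profinite_stone_homeomorphic.
by exists (@clopen_of A); apply: clopen_of_iso.
Qed.
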